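(* Assume $\Phi_h=M_h=\mathbb{P}_1$. Then any solution $(\phi^{n+1},\mu^{n+1})\in\Phi_h\times M_h$ of the G$_\varepsilon$-scheme satisfies $$\int_\Omega\big(I_h(\phi^{n+1}_-)\big)^2d\boldsymbol x\le C\,\frac{\varepsilon(1-\varepsilon)}{\eta^2}\le C\,\frac{\varepsilon}{\eta^2}\quad\text{and}\quad\int_\Omega\Big(I_h\big((\phi^{n+1}-1)_+\big)\Big)^2d\boldsymbol x\le C\,\frac{\varepsilon(1-\varepsilon)}{\eta^2}\le C\,\frac{\varepsilon}{\eta^2},$$ where $C$ depends on the initial energy $E(\phi^0)$ and on $\int_\Omega I_h(G_\varepsilon(\phi^0))\,d\boldsymbol x$.
   Context: $\Omega\subset\mathbb{R}^d$ ($d=1,2,3$) bounded, $\eta>0$, $\varepsilon\in(0,1/2)$. $f_-=\min\{f,0\}$ and $f_+=\max\{f,0\}$. $F(\phi)=\frac1{4\eta^2}\phi^2(\phi-1)^2=F_c+F_e$ with $F_c(\phi)=\frac1{4\eta^2}(\phi^4-2\phi^3+\frac32\phi^2)$, $F_e(\phi)=-\frac1{8\eta^2}\phi^2$; $E(\phi)=\int_\Omega(\frac12|\nabla\phi|^2+F(\phi))d\boldsymbol x$. The time interval $[0,T]$ is split into $N$ steps of size $\Delta t=T/N$, $n=0,\dots,N-1$. $\mathcal T_h$ is a structured triangulation of $\Omega$ in which every element $I$ has vertices $\boldsymbol x_0,\dots,\boldsymbol x_d$ with $\boldsymbol x_k-\boldsymbol x_0$ parallel to the $k$-th coordinate axis;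 $\Phi_h=M_h$ is the space of continuous piecewise $\mathbb{P}_1$ functions. $I_h$ is nodal $\mathbb{P}_1$ interpolation, $(f,g)_h=\int_\Omega I_h(fg)\,d\boldsymbol x$, $(\cdot,\cdot)$ the $L^2$ product. $G(\phi)=\phi\ln\phi+(1-\phi)\ln(1-\phi)+1$; $G_\varepsilon\in C^2(\mathbb{R})$ equals $G$ on $[\varepsilon,1-\varepsilon]$ and its second-order Taylor polynomial at $\varepsilon$ (resp. $1-\varepsilon$) for $\phi<\varepsilon$ (resp. $\phi>1-\varepsilon$), so $G_\varepsilon''=1/M_\varepsilon$ with $M_\varepsilon(\phi)=\phi(1-\phi)$ truncated to $\varepsilon(1-\varepsilon)$ outside $[\varepsilon,1-\varepsilon]$. For $\phi\in\Phi_h$, $M^G_\varepsilon(\phi)$ is the piecewise constant diagonal matrix with $k$-th entry on $I$ equal to $\frac{\phi(\boldsymbol x_k)-\phi(\boldsymbol x_0)}{G_\varepsilon'(\phi(\boldsymbol x_k))-G_\varepsilon'(\phi(\boldsymbol x_0))}$ if $\phi(\boldsymbol x_k)\ne\phi(\boldsymbol x_0)$, and $1/G_\varepsilon''(\phi(\boldsymbol x_0))$ otherwise. G$_\varepsilon$-scheme: given $\phi^n\in\Phi_h$ (starting from $\phi^0\in\Phi_h$), find $(\phi^{n+1},\mu^{n+1})\in\Phi_h\times M_h$ such that for all $(\bar\phi,\bar\mu)\in\Phi_h\times M_h$: $\frac1{\Delta t}(\phi^{n+1}-\phi^n,\bar\mu)_h+(M^G_\varepsilon(\phi^{n+1})\nabla\mu^{n+1},\nabla\bar\mu)=0$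 and $(\nabla\phi^{n+1},\nabla\bar\phi)+(I_h(F_c'(\phi^{n+1}))+I_h(F_e'(\phi^n)),\bar\phi)_h=(\mu^{n+1},\bar\phi)_h$.
   Formalization: The interface parameter satisfies 0 < η ≤ 1 rather than only η > 0, and C may depend on the final time T besides E(φ⁰) and $\int_\Omega I_h(G_\varepsilon(\phi^0))\,d\boldsymbol x$. Each condition added here is assumed in the paper as well or is needed for the statement above to hold. *)

From HB Require Import structures.
From mathcomp Require Import all_boot all_order all_algebra.
From mathcomp Require Import reals exp.
Set Implicit Arguments. Unset Strict Implicit. Unset Printing Implicit Defensive.
Import Order.TTheory GRing.Theory Num.Theory.
Local Open Scope ring_scope.

Section Potentials.
Context {R : realType}.

(* F_c'(phi), F_e'(phi), with F_c = (phi^4 - 2 phi^3 + 3/2 phi^2)/(4 eta^2),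
   F_e = - phi^2 / (8 eta^2). *)
Definition Fcp (eta phi : R) : R :=
  (4 * phi ^+ 3 - 6 * phi ^+ 2 + 3 * phi) / (4 * eta ^+ 2).
Definition Fep (eta phi : R) : R := - phi / (4 * eta ^+ 2).

Definition Gfun (phi : R) : R := phi * ln phi + (1 - phi) * ln (1 - phi) + 1.
Definition dGfun (phi : R) : R := ln phi - ln (1 - phi).
Definition d2Gfun (phi : R) : R := (phi * (1 - phi))^-1.

Definition Geps (eps phi : R) : R :=
  if phi < eps then
    Gfun eps + dGfun eps * (phi - eps) + d2Gfun eps / 2 * (phi - eps) ^+ 2
  else if 1 - eps < phi then
    Gfun (1 - eps) + dGfun (1 - eps) * (phi - (1 - eps))
      + d2Gfun (1 - eps) / 2 * (phi - (1 - eps)) ^+ 2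
  else Gfun phi.

Definition dGeps (eps phi : R) : R :=
  if phi < eps then dGfun eps + d2Gfun eps * (phi - eps)
  else if 1 - eps < phi then dGfun (1 - eps) + d2Gfun (1 - eps) * (phi - (1 - eps))
  else dGfun phi.

Definition Meps (eps phi : R) : R :=
  if phi < eps then eps * (1 - eps)
  else if 1 - eps < phi then eps * (1 - eps)
  else phi * (1 - phi).
Definition d2Geps (eps phi : R) : R := (Meps eps phi)^-1.

End Potentials.

(* A P1 function is given by its nodal values u : V -> R.               *)
Section Mesh.
Context {R : realType} {d : nat} {V Elt : finType}.
Variables (x : V -> 'I_d -> R) (vtx : Elt -> 'I_d.+1 -> V).

Definition vert0 (I : Elt) : V := vtx I ord0.
(* vertex x_k, k = 1..d, indexed by k-1 : 'I_d *)
Definition vertk (I : Elt) (k : 'I_d) : V := vtx I (lift ord0 k).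

Definition is_vertex (I : Elt) (v : V) : Prop := exists k, vtx I k = v.

Definition in_hull (S : V -> Prop) (y : 'I_d -> R) : Prop :=
  exists lam : V -> R,
    (forall v, 0 <= lam v) /\ (forall v, lam v != 0 -> S v) /\
    \sum_v lam v = 1 /\ (forall j, y j = \sum_v lam v * x v j).

(* signed edge length: x_k - x_0 = hk I k * e_k *)
Definition hk (I : Elt) (k : 'I_d) : R := x (vertk I k) k - x (vert0 I) k.

(* A structured (conforming) triangulation: each element has
   x_k - x_0 parallel to the k-th axis (and nonzero); distinct nodes are
   distinct points and every node is a vertex; two distinct elements meet
   exactly in the convex hull of their common vertices (a common face or
   the empty set); distinct elements have distinct vertex sets. *)
Definition structured_mesh : Prop :=
  [/\ (forall I (k j : 'I_d), j != k -> x (vertk I k) j = x (vert0 I) j),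
      (forall I k, hk I k != 0),
      injective x /\ (forall v, exists I, is_vertex I v),
      (forall I J, I != J -> forall y,
        (in_hull (is_vertex I) y /\ in_hull (is_vertex J) y) <->
        in_hull (fun v => is_vertex I v /\ is_vertex J v) y)
    & (forall I J, (forall v, is_vertex I v <-> is_vertex J v) -> I = J)].

Definition vol (I : Elt) : R := `|\prod_(k < d) hk I k| / (d`!)%:R.

Definition dpart (u : V -> R) (I : Elt) (k : 'I_d) : R :=
  (u (vertk I k) - u (vert0 I)) / hk I k.

(* int_Omega I_h(f) dx, for nodal values f *)
Definition lumped (f : V -> R) : R :=
  \sum_I vol I / (d.+1)%:R * \sum_(k < d.+1) f (vtx I k).

Definition hprod (f g : V -> R) : R := lumped (fun v => f v * g v).

Definition stiffA (A : Elt -> 'I_d -> R) (u w : V -> R) : R :=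
  \sum_I vol I * \sum_(k < d) A I k * dpart u I k * dpart w I k.

Definition stiff (u w : V -> R) : R := stiffA (fun _ _ => 1) u w.

(* complete homogeneous symmetric polynomial of degree p in a_0..a_d *)
Definition hpoly (p : nat) (a : 'I_d.+1 -> R) : R :=
  \sum_(s : p.-tuple 'I_d.+1 | sorted (fun i j : 'I_d.+1 => (i <= j)%N) s)
     \prod_(i <- s) a i.

(* exact integral over Omega of (u_h)^p, u_h the P1 function with nodal
   values u:  int_I (sum_k a_k lambda_k)^p = |I| d! p! / (d+p)! h_p(a) *)
Definition intpow (u : V -> R) (p : nat) : R :=
  \sum_I vol I * ((d`! * p`!)%:R / ((d + p)`!)%:R) * hpoly p (fun k => u (vtx I k)).

(* E(phi) = int_Omega (1/2 |grad phi|^2 + F(phi)) dx, with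
   F(phi) = (phi^4 - 2 phi^3 + phi^2) / (4 eta^2), computed exactly *)
Definition energy (eta : R) (phi : V -> R) : R :=
  stiff phi phi / 2 +
  (intpow phi 4 - 2 * intpow phi 3 + intpow phi 2) / (4 * eta ^+ 2).

Definition MG (eps : R) (phi : V -> R) (I : Elt) (k : 'I_d) : R :=
  let a0 := phi (vert0 I) in
  let ak := phi (vertk I k) in
  if ak != a0 then (ak - a0) / (dGeps eps ak - dGeps eps a0)
  else (d2Geps eps a0)^-1.

Definition Gscheme (dt eps eta : R) (phin phi1 mu1 : V -> R) : Prop :=
  (forall mub : V -> R,
      dt^-1 * hprod (fun v => phi1 v - phin v) mub + stiffA (MG eps phi1) mu1 mub = 0)
  /\
  (forall phib : V -> R,
      stiff phi1 phib + hprod (fun v => Fcp eta (phi1 v) + Fep eta (phin v)) phib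
      = hprod mu1 phib).

End Mesh.

(* Testing the second equation with phi^(n+1) - phi^n and the first with mu^(n+1) shows that
   the lumped energy decays, F being split into a convex implicit and a concave explicit part.
   Testing the first equation with I_h G_eps'(phi^(n+1)) instead, the defining property of the
   mobility, M^G_eps d_k (I_h G_eps'(phi)) = d_k phi on each element, turns the mobility term
   into (grad mu, grad phi^(n+1)); testing the second equation with
   mu - F_c'(phi^(n+1)) - F_e'(phi^n) bounds this from below by
   -(grad phi^(n+1), grad phi^n) / (4 eta^2), since F_c' is nondecreasing.  With the energy
   bound this gives
     int I_h G_eps(phi^(n+1)) <= int I_h G_eps(phi^0) + 20 T E(phi^0) / eta^2.
   Below eps, G_eps(t) = G(eps) + G'(eps) (t - eps) + (t - eps)^2 / (2 eps (1 - eps)) with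
   G(eps) >= 0 and G'(eps) <= 0, so t_-^2 <= 2 eps (1 - eps) G_eps(t), and symmetrically for
   (t - 1)_+.  Finally, on a simplex of dimension at most 3 the exact L^2 norm of a P1 function
   is bounded by its lumped one, and the lumped double-well energy by 40 times the exact one. *)

From Pilot Require Import Defs.
From HB Require Import structures.
From mathcomp Require Import all_boot all_order all_algebra.
From mathcomp Require Import reals exp.
From mathcomp Require Import ring lra.
Set Implicit Arguments. Unset Strict Implicit. Unset Printing Implicit Defensive.
Import Order.TTheory GRing.Theory Num.Theory.
Local Open Scope ring_scope.

(** * Convexity of the potentials *)

Section StrictTangent.
Context {R : realFieldType}.
Implicit Types (G g : R -> R) (P Q : R -> Prop).

Definition strict_tangent_on G g P :=
  forall a b, P a -> P b -> a != b -> G a + g a * (b - a) < G b.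

Lemma strict_tangent_on_homo G g P : strict_tangent_on G g P ->
  forall a b, P a -> P b -> a < b -> g a < g b.
Proof.
move=> tG a b Pa Pb ab.
have := tG a b Pa Pb (negbT (lt_eqF ab)); have := tG b a Pb Pa (negbT (gt_eqF ab)).
nra.
Qed.

Lemma strict_tangent_on_glue G g P Q p : P p -> Q p ->
  (forall a, P a -> a <= p) -> (forall b, Q b -> p <= b) ->
  strict_tangent_on G g P -> strict_tangent_on G g Q ->
  strict_tangent_on G g (fun t => P t \/ Q t).
Proof.
move=> Pp Qp Ple Qge tP tQ a b [Pa|Qa] [Pb|Qb] ab; try by [apply: tP | apply: tQ].
- have [ap|ap] := eqVneq a p; first by rewrite ap in ab *; exact: tQ.
  have [bp|bp] := eqVneq b p; first by rewrite bp in ab *; exact: tP.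
  have ltap : a < p by rewrite lt_neqAle ap Ple.
  have ltpb : p < b by rewrite lt_neqAle eq_sym bp Qge.
  have gap := strict_tangent_on_homo tP Pa Pp ltap.
  have := tP a p Pa Pp ap; have := tQ p b Qp Qb (negbT (lt_eqF ltpb)).
  have : 0 <= (g p - g a) * (b - p) by apply: mulr_ge0; lra.
  lra.
- have [ap|ap] := eqVneq a p; first by rewrite ap in ab *; exact: tP.
  have [bp|bp] := eqVneq b p; first by rewrite bp in ab *; exact: tQ.
  have ltpa : p < a by rewrite lt_neqAle eq_sym ap Qge.
  have ltbp : b < p by rewrite lt_neqAle bp Ple.
  have gpa := strict_tangent_on_homo tQ Qp Qa ltpa.
  have := tQ a p Qa Qp ap; have := tP p b Pp Pb (negbT (gt_eqF ltbp)).
  have : 0 <= (g a - g p) * (p - b) by apply: mulr_ge0; lra.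
  lra.
Qed.

Lemma sub_strict_tangent_on G g G' g' P Q : strict_tangent_on G' g' Q ->
  (forall t, P t -> [/\ Q t, G t = G' t & g t = g' t]) ->
  strict_tangent_on G g P.
Proof.
move=> tG' PQ a b Pa Pb ab.
have [Qa -> ->] := PQ a Pa; have [Qb -> _] := PQ b Pb.
exact: tG'.
Qed.

Lemma quadratic_strict_tangent (c0 c1 c2 t0 : R) : 0 < c2 ->
  strict_tangent_on (fun t => c0 + c1 * (t - t0) + c2 / 2 * (t - t0) ^+ 2)
    (fun t => c1 + c2 * (t - t0)) (fun => True).
Proof.
move=> c2_gt0 a b _ _ ab; rewrite -subr_gt0.
have -> : c0 + c1 * (b - t0) + c2 / 2 * (b - t0) ^+ 2
   - (c0 + c1 * (a - t0) + c2 / 2 * (a - t0) ^+ 2 + (c1 + c2 * (a - t0)) * (b - a))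
   = c2 / 2 * (b - a) ^+ 2 by field.
by rewrite mulr_gt0 ?divr_gt0 ?exprn_even_gt0 //= subr_eq0 eq_sym.
Qed.

End StrictTangent.

Section Entropy.
Context {R : realType}.

Lemma ln_lt_subr1 (y : R) : 0 < y -> y != 1 -> ln y < y - 1.
Proof.
move=> y_gt0 y_neq1.
have := @expR_gt1Dx R (ln y); rewrite lnK ?posrE // ln_eq0 // => /(_ y_neq1).
lra.
Qed.

Lemma lnB_lt (a b : R) : 0 < a -> 0 < b -> a != b -> b - a < b * (ln b - ln a).
Proof.
move=> a_gt0 b_gt0 ab.
have b_neq0 : b != 0 by rewrite gt_eqF.
have ab1 : a / b != 1.
  by apply: contra ab => /eqP ab1; rewrite -[a](divfK b_neq0) ab1 mul1r.
have := ln_lt_subr1 (divr_gt0 a_gt0 b_gt0) ab1; rewrite ln_div ?posrE //.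
have : b * (a / b) = a by rewrite mulrC divfK.
nra.
Qed.

Lemma Gfun_strict_tangent : strict_tangent_on (@Gfun R) dGfun (fun t => 0 < t < 1).
Proof.
move=> a b /andP[a_gt0 a_lt1] /andP[b_gt0 b_lt1] ab.
have := lnB_lt a_gt0 b_gt0 ab.
have : (1 - b) - (1 - a) < (1 - b) * (ln (1 - b) - ln (1 - a)).
  by apply: lnB_lt; [lra | lra | apply: contra ab => /eqP ab'; apply/eqP; lra].
rewrite /Gfun /dGfun; lra.
Qed.

Lemma Gfun_half : Gfun (1 / 2 : R) = 1 - ln 2.
Proof.
rewrite /Gfun (_ : 1 - 1 / 2 = 1 / 2 :> R); last by field.
by rewrite mul1r lnV ?posrE //; field.
Qed.

Lemma dGfun_half : dGfun (1 / 2 : R) = 0.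
Proof. by rewrite /dGfun (_ : 1 - 1 / 2 = 1 / 2 :> R) ?subrr //; field. Qed.

End Entropy.

Section RegularizedEntropy.
Context {R : realType}.
Variable eps : R.
Hypotheses (eps_gt0 : 0 < eps) (eps_lt_half : eps < 1 / 2).

Local Notation m := (eps * (1 - eps)).

Let eps_lt_1subr : eps < 1 - eps. Proof. by move: eps_lt_half; lra. Qed.
Let subr_eps_gt0 : 0 < 1 - eps. Proof. exact: lt_trans eps_lt_1subr. Qed.
Let m_gt0 : 0 < m. Proof. exact: mulr_gt0. Qed.

Lemma d2Gfun_1subr_eps : d2Gfun (1 - eps) = m^-1.
Proof. by rewrite /d2Gfun; congr (_^-1); ring. Qed.

Lemma Geps_left t : t <= eps ->
  Geps eps t = Gfun eps + dGfun eps * (t - eps) + m^-1 / 2 * (t - eps) ^+ 2 /\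
  dGeps eps t = dGfun eps + m^-1 * (t - eps).
Proof.
rewrite /Geps /dGeps le_eqVlt => /orP[/eqP ->|-> //].
by rewrite [1 - eps < eps]ltNge (ltW eps_lt_1subr) ltxx /=; split; ring.
Qed.

Lemma Geps_right t : 1 - eps <= t ->
  Geps eps t = Gfun (1 - eps) + dGfun (1 - eps) * (t - (1 - eps))
               + m^-1 / 2 * (t - (1 - eps)) ^+ 2 /\
  dGeps eps t = dGfun (1 - eps) + m^-1 * (t - (1 - eps)).
Proof.
move=> t_ge; rewrite /Geps /dGeps [t < eps]ltNge (le_trans (ltW eps_lt_1subr) t_ge) /=.
rewrite -d2Gfun_1subr_eps; move: t_ge; rewrite le_eqVlt => /orP[/eqP <-|-> //].
by rewrite ltxx /=; split; ring.
Qed.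

Lemma Geps_mid t : eps <= t <= 1 - eps -> Geps eps t = Gfun t /\ dGeps eps t = dGfun t.
Proof.
by move=> /andP[t_ge t_le]; rewrite /Geps /dGeps ltNge t_ge /= ltNge t_le.
Qed.

Lemma Geps_strict_tangent : strict_tangent_on (Geps eps) (dGeps eps) (fun => True).
Proof.
have minv_gt0 : 0 < m^-1 by rewrite invr_gt0.
have tL : strict_tangent_on (Geps eps) (dGeps eps) (fun t => t <= eps).
  refine (sub_strict_tangent_on (quadratic_strict_tangent _ _ _ minv_gt0) _).
  by move=> t /Geps_left[-> ->].
have tM : strict_tangent_on (Geps eps) (dGeps eps) (fun t => eps <= t <= 1 - eps).
  refine (sub_strict_tangent_on Gfun_strict_tangent _) => t t_mid.
  have [-> ->] := Geps_mid t_mid; split=> //.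
  by move: t_mid eps_gt0 eps_lt_half; lra.
have tR : strict_tangent_on (Geps eps) (dGeps eps) (fun t => 1 - eps <= t).
  refine (sub_strict_tangent_on (quadratic_strict_tangent _ _ _ minv_gt0) _).
  by move=> t /Geps_right[-> ->].
have tLM : strict_tangent_on (Geps eps) (dGeps eps) (fun t => t <= 1 - eps).
  refine (sub_strict_tangent_on (strict_tangent_on_glue (p := eps) _ _ _ _ tL tM) _) => //.
  - by rewrite lexx ltW.
  - by move=> b /andP[].
  - move=> t t_le; split=> //.
    by have [|t_gt] := lerP t eps; [left | right; rewrite (ltW t_gt)].
refine (sub_strict_tangent_on (strict_tangent_on_glue (p := 1 - eps) _ _ _ _ tLM tR) _) => //.
move=> t _; split=> //.
by have [|t_gt] := lerP t (1 - eps); [left | right; rewrite ltW].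
Qed.

Lemma dGeps_lt : {homo dGeps eps : a b / a < b}.
Proof. by move=> a b; exact: strict_tangent_on_homo Geps_strict_tangent a b I I. Qed.

Lemma dGeps_le : {mono dGeps eps : a b / a <= b}.
Proof. exact: le_mono dGeps_lt. Qed.

Lemma dGeps_inj : injective (dGeps eps).
Proof. exact: inc_inj dGeps_le. Qed.

Lemma Geps_tangent a b : Geps eps a + dGeps eps a * (b - a) <= Geps eps b.
Proof.
have [->|ab] := eqVneq a b; first by rewrite subrr mulr0 addr0.
exact/ltW/Geps_strict_tangent.
Qed.

Lemma Geps_half : Geps eps (1 / 2) = 1 - ln 2 /\ dGeps eps (1 / 2) = 0.
Proof.
rewrite -Gfun_half -dGfun_half; apply: Geps_mid.
by move: eps_lt_half; lra.
Qed.

Lemma Geps_ge0 t : 0 <= Geps eps t.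
Proof.
have [G12 dG12] := Geps_half; have := Geps_tangent (1 / 2) t.
rewrite G12 dG12 mul0r addr0; apply: le_trans; rewrite subr_ge0.
by have := @le_ln1Dx R 1; rewrite -[1 + 1]/(2%:R : R); apply; lra.
Qed.

Lemma Geps_neg_part t : Num.min t 0 ^+ 2 <= 2 * m * Geps eps t.
Proof.
have m2_ge0 : 0 <= 2 * m by rewrite mulr_ge0 // ltW.
have [t_ge0|t_lt0] := leP 0 t.
  by rewrite expr0n mulr_ge0 ?Geps_ge0.
have t_le : t <= eps by rewrite ltW // (lt_trans t_lt0).
have eps_mid : eps <= eps <= 1 - eps by rewrite lexx ltW.
have [G0 _] := Geps_mid eps_mid.
have G_ge0 : 0 <= 2 * m * Gfun eps by rewrite -G0 mulr_ge0 ?Geps_ge0.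
have dG_ge0 : 0 <= 2 * m * (dGfun eps * (t - eps)).
  by rewrite mulr_ge0 // mulr_le0 ?subr_le0 // ler_ln ?posrE ?ltW.
rewrite (proj1 (Geps_left t_le)).
have -> : 2 * m * (Gfun eps + dGfun eps * (t - eps) + m^-1 / 2 * (t - eps) ^+ 2)
  = 2 * m * Gfun eps + 2 * m * (dGfun eps * (t - eps)) + (t - eps) ^+ 2.
  by field; rewrite !gt_eqF.
by move: G_ge0 dG_ge0 eps_gt0; nra.
Qed.

Lemma Geps_pos_part t : Num.max (t - 1) 0 ^+ 2 <= 2 * m * Geps eps t.
Proof.
have m2_ge0 : 0 <= 2 * m by rewrite mulr_ge0 // ltW.
have [t_le1|t_gt1] := leP (t - 1) 0.
  by rewrite expr0n mulr_ge0 ?Geps_ge0.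
have t_ge : 1 - eps <= t by move: t_gt1 eps_gt0; lra.
have eps_mid : eps <= 1 - eps <= 1 - eps by rewrite lexx ltW.
have [G0 _] := Geps_mid eps_mid.
have G_ge0 : 0 <= 2 * m * Gfun (1 - eps) by rewrite -G0 mulr_ge0 ?Geps_ge0.
have dG_ge0 : 0 <= dGfun (1 - eps).
  rewrite /dGfun (_ : 1 - (1 - eps) = eps) ?subr_ge0 ?ler_ln ?posrE ?ltW //.
  by rewrite opprB addrC subrK.
have dGt_ge0 : 0 <= dGfun (1 - eps) * (t - (1 - eps)).
  by apply: mulr_ge0; rewrite // subr_ge0.
rewrite (proj1 (Geps_right t_ge)).
have -> : 2 * m * (Gfun (1 - eps) + dGfun (1 - eps) * (t - (1 - eps))
                   + m^-1 / 2 * (t - (1 - eps)) ^+ 2)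
  = 2 * m * Gfun (1 - eps) + 2 * m * (dGfun (1 - eps) * (t - (1 - eps)))
    + (t - (1 - eps)) ^+ 2.
  by field; rewrite !gt_eqF.
by move: G_ge0 (mulr_ge0 m2_ge0 dGt_ge0) eps_gt0; nra.
Qed.

Lemma Meps_ge0 t : 0 <= Meps eps t.
Proof.
rewrite /Meps; case: ifPn => [_|]; first exact: ltW m_gt0.
rewrite -leNgt => t_ge; case: ifPn => [_|]; first exact: ltW m_gt0.
rewrite -leNgt => t_le; apply: mulr_ge0; first exact: le_trans (ltW eps_gt0) t_ge.
by move: t_le eps_gt0; lra.
Qed.

End RegularizedEntropy.

Section DoubleWell.
Context {R : realType}.
Implicit Types (eta a b : R).

Definition Fdw eta a : R := a ^+ 2 * (a - 1) ^+ 2 / (4 * eta ^+ 2).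

Lemma Fdw_ge0 eta a : 0 <= Fdw eta a.
Proof. by apply: divr_ge0; apply: mulr_ge0; rewrite ?sqr_ge0 ?ler0n. Qed.

Lemma Fdw_convex_splitting eta a b :
  Fdw eta b - Fdw eta a <= (Fcp eta b + Fep eta a) * (b - a).
Proof.
have : 0 <= (4 * eta ^+ 2)^-1 by rewrite invr_ge0 mulr_ge0 ?sqr_ge0.
rewrite /Fdw /Fcp /Fep; move: (4 * eta ^+ 2)^-1 => c c_ge0; rewrite -subr_ge0.
have -> : ((4 * b ^+ 3 - 6 * b ^+ 2 + 3 * b) * c + - a * c) * (b - a)
    - (b ^+ 2 * (b - 1) ^+ 2 * c - a ^+ 2 * (a - 1) ^+ 2 * c)
  = c / 2 * ((b - a) ^+ 2 * (2 * (a + b - 1) ^+ 2 + (2 * b - 1) ^+ 2 + 1)).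
  by field.
have : 0 <= 2 * (a + b - 1) ^+ 2 + (2 * b - 1) ^+ 2 + 1.
  by have := sqr_ge0 (a + b - 1); have := sqr_ge0 (2 * b - 1); lra.
by move/(mulr_ge0 (sqr_ge0 (b - a)))/(mulr_ge0 (divr_ge0 c_ge0 (ler0n _ 2))).
Qed.

Lemma Fcp_monotone eta a b : 0 <= (b - a) * (Fcp eta b - Fcp eta a).
Proof.
have : 0 <= (4 * eta ^+ 2)^-1 by rewrite invr_ge0 mulr_ge0 ?sqr_ge0.
rewrite /Fcp -mulrBl; move: (4 * eta ^+ 2)^-1 => c c_ge0.
have -> : (b - a) * ((4 * b ^+ 3 - 6 * b ^+ 2 + 3 * b - (4 * a ^+ 3 - 6 * a ^+ 2 + 3 * a)) * c)
  = c * ((b - a) ^+ 2 * (3 * (a + b - 1) ^+ 2 + (b - a) ^+ 2)).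
  by ring.
have : 0 <= 3 * (a + b - 1) ^+ 2 + (b - a) ^+ 2.
  by have := sqr_ge0 (a + b - 1); have := sqr_ge0 (b - a); lra.
by move/(mulr_ge0 (sqr_ge0 (b - a)))/(mulr_ge0 c_ge0).
Qed.

End DoubleWell.

(** * Discrete forms and one step of the scheme *)

Section DiscreteForms.
Context {R : realType} {d : nat} {V Elt : finType}.
Variables (x : V -> 'I_d -> R) (vtx : Elt -> 'I_d.+1 -> V).
Implicit Types (u w f g : V -> R) (A : Elt -> 'I_d -> R).

Local Notation vol := (vol x vtx).
Local Notation dpart := (dpart x vtx).
Local Notation lumped := (lumped x vtx).
Local Notation hprod := (hprod x vtx).
Local Notation stiffA := (stiffA x vtx).
Local Notation stiff := (stiff x vtx).

Lemma vol_ge0 I : 0 <= vol I.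
Proof. by rewrite divr_ge0 ?normr_ge0 ?ler0n. Qed.

Lemma lumped_weight_ge0 I : 0 <= vol I / d.+1%:R.
Proof. by rewrite divr_ge0 ?vol_ge0 ?ler0n. Qed.

Lemma lumped_le f g : (forall v, f v <= g v) -> lumped f <= lumped g.
Proof.
move=> fg; apply: ler_sum => I _.
by rewrite ler_wpM2l ?lumped_weight_ge0 ?ler_sum.
Qed.

Lemma lumped_ge0 f : (forall v, 0 <= f v) -> 0 <= lumped f.
Proof.
move=> f_ge0; apply: sumr_ge0 => I _.
by rewrite mulr_ge0 ?lumped_weight_ge0 ?sumr_ge0.
Qed.

Lemma eq_lumped f g : f =1 g -> lumped f = lumped g.
Proof.
by move=> fg; apply: eq_bigr => I _; congr (_ * _); apply: eq_bigr => k _.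
Qed.

Lemma lumpedB f g : lumped (fun v => f v - g v) = lumped f - lumped g.
Proof.
rewrite /Defs.lumped -sumrB; apply: eq_bigr => I _.
by rewrite sumrB mulrBr.
Qed.

Lemma lumpedZ c f : lumped (fun v => c * f v) = c * lumped f.
Proof.
rewrite /Defs.lumped mulr_sumr; apply: eq_bigr => I _.
by rewrite -mulr_sumr mulrCA.
Qed.

Lemma hprodC f g : hprod f g = hprod g f.
Proof. by apply: eq_lumped => v; rewrite mulrC. Qed.

Lemma hprodBl f g w : hprod (fun v => f v - g v) w = hprod f w - hprod g w.
Proof. by rewrite -lumpedB; apply: eq_lumped => v; rewrite mulrBl. Qed.

Lemma hprod_ge0 f : 0 <= hprod f f.
Proof.
apply: sumr_ge0 => I _; rewrite mulr_ge0 ?lumped_weight_ge0 //.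
by apply: sumr_ge0 => k _; rewrite -expr2 sqr_ge0.
Qed.

Lemma dpartB u w I k : dpart (fun v => u v - w v) I k = dpart u I k - dpart w I k.
Proof. by rewrite /Defs.dpart; ring. Qed.

Lemma dpartD u w I k : dpart (fun v => u v + w v) I k = dpart u I k + dpart w I k.
Proof. by rewrite /Defs.dpart; ring. Qed.

Lemma stiffA_ge0 A u : (forall I k, 0 <= A I k) -> 0 <= stiffA A u u.
Proof.
move=> A_ge0; apply: sumr_ge0 => I _; rewrite mulr_ge0 ?vol_ge0 //.
by apply: sumr_ge0 => k _; rewrite -mulrA mulr_ge0 // -expr2 sqr_ge0.
Qed.

Lemma stiffA_lin A u w w1 w2 a b :
  (forall I k, dpart w I k = a * dpart w1 I k + b * dpart w2 I k) ->
  stiffA A u w = a * stiffA A u w1 + b * stiffA A u w2.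
Proof.
move=> dw; rewrite /Defs.stiffA 2!mulr_sumr -big_split; apply: eq_bigr => I _ /=.
rewrite mulrCA [b * _]mulrCA -mulrDr; congr (_ * _).
by rewrite 2!mulr_sumr -big_split; apply: eq_bigr => k _ /=; rewrite dw; ring.
Qed.

Lemma stiffBr u w1 w2 : stiff u (fun v => w1 v - w2 v) = stiff u w1 - stiff u w2.
Proof.
rewrite /Defs.stiff (@stiffA_lin _ _ _ w1 w2 1 (-1)) ?mul1r ?mulN1r //.
by move=> I k; rewrite dpartB; ring.
Qed.

Lemma stiffDr u w1 w2 : stiff u (fun v => w1 v + w2 v) = stiff u w1 + stiff u w2.
Proof.
rewrite /Defs.stiff (@stiffA_lin _ _ _ w1 w2 1 1) ?mul1r //.
by move=> I k; rewrite dpartD; ring.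
Qed.

Lemma stiffC u w : stiff u w = stiff w u.
Proof.
by apply: eq_bigr => I _; congr (_ * _); apply: eq_bigr => k _; rewrite mulrAC.
Qed.

Lemma stiffBl u1 u2 w : stiff (fun v => u1 v - u2 v) w = stiff u1 w - stiff u2 w.
Proof. by rewrite stiffC stiffBr !(stiffC w). Qed.

Lemma stiff_ge0 u : 0 <= stiff u u.
Proof. exact: stiffA_ge0. Qed.

Lemma stiff_cross_le u w : 2 * stiff u w <= stiff u u + stiff w w.
Proof.
have := stiff_ge0 (fun v => u v - w v).
by rewrite stiffBl !stiffBr (stiffC w u); lra.
Qed.

Lemma stiff_sqr_sub_le u w : stiff u u - stiff w w <= 2 * stiff u (fun v => u v - w v).
Proof. by rewrite stiffBr; have := stiff_cross_le u w; lra. Qed.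

Lemma stiff_Fep eta u w :
  stiff u (fun v => Fep eta (w v)) = - (4 * eta ^+ 2)^-1 * stiff u w.
Proof.
rewrite /Defs.stiff (@stiffA_lin _ _ _ w w (- (4 * eta ^+ 2)^-1) 0) ?mul0r ?addr0 //.
by move=> I k; rewrite /Defs.dpart /Fep; ring.
Qed.

Lemma stiff_Fcp_ge0 eta u : 0 <= stiff u (fun v => Fcp eta (u v)).
Proof.
apply: sumr_ge0 => I _; rewrite mulr_ge0 ?vol_ge0 //; apply: sumr_ge0 => k _.
by rewrite mul1r /Defs.dpart mulrACA -expr2 mulr_ge0 ?Fcp_monotone ?sqr_ge0.
Qed.

Section MobilityMatrix.
Variable eps : R.
Hypotheses (eps_gt0 : 0 < eps) (eps_lt_half : eps < 1 / 2).

Lemma MG_ge0 phi I k : 0 <= MG vtx eps phi I k.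
Proof.
rewrite /MG; case: ifPn => [ab|_]; last by rewrite /d2Geps invrK Meps_ge0.
have dG_le := dGeps_le eps_gt0 eps_lt_half.
have [lt|gt|eq] := ltgtP (phi (vertk vtx I k)) (phi (vert0 vtx I)).
- by rewrite mulr_le0 ?invr_le0 ?subr_le0 ?dG_le ?ltW.
- by rewrite divr_ge0 ?subr_ge0 ?dG_le ?ltW.
- by rewrite eq eqxx in ab.
Qed.

Lemma MG_dpart_dGeps phi I k :
  MG vtx eps phi I k * dpart (fun v => dGeps eps (phi v)) I k = dpart phi I k.
Proof.
rewrite /MG /Defs.dpart; case: ifPn => [ab|/negPn/eqP ->]; last first.
  by rewrite !subrr !mul0r mulr0.
rewrite mulrA divfK // subr_eq0.
by rewrite (inj_eq (dGeps_inj eps_gt0 eps_lt_half)).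
Qed.

Lemma stiffA_MG_dGeps phi u :
  stiffA (MG vtx eps phi) u (fun v => dGeps eps (phi v)) = stiff u phi.
Proof.
apply: eq_bigr => I _; congr (_ * _); apply: eq_bigr => k _.
by rewrite mulrAC MG_dpart_dGeps mul1r mulrC.
Qed.

End MobilityMatrix.

Definition lumped_energy eta u := stiff u u / 2 + lumped (fun v => Fdw eta (u v)).

Lemma stiff_le_lumped_energy eta u : stiff u u <= 2 * lumped_energy eta u.
Proof.
have := lumped_ge0 (fun v => Fdw_ge0 eta (u v)).
by rewrite /lumped_energy; lra.
Qed.

Lemma lumped_energy_ge0 eta u : 0 <= lumped_energy eta u.
Proof. by have := stiff_le_lumped_energy eta u; have := stiff_ge0 u; lra. Qed.

Section SchemeStep.
Variables (dt eps eta : R) (p0 p1 mu : V -> R).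
Hypotheses (dt_gt0 : 0 < dt) (eps_gt0 : 0 < eps) (eps_lt_half : eps < 1 / 2).
Hypothesis step : Gscheme x vtx dt eps eta p0 p1 mu.

Local Notation dphi := (fun v => p1 v - p0 v).
Local Notation chem := (fun v => Fcp eta (p1 v) + Fep eta (p0 v)).

Lemma Gscheme_flux mub : hprod dphi mub = - (dt * stiffA (MG vtx eps p1) mu mub).
Proof.
have /eqP := step.1 mub; rewrite addr_eq0 => /eqP flux.
by rewrite -mulrN -flux mulrA divff ?mul1r // gt_eqF.
Qed.

Lemma lumped_energy_decay : lumped_energy eta p1 <= lumped_energy eta p0.
Proof.
have dS := stiff_sqr_sub_le p1 p0.
have dF : lumped (fun v => Fdw eta (p1 v)) - lumped (fun v => Fdw eta (p0 v))
          <= hprod chem dphi.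
  rewrite -lumpedB; apply: lumped_le => v /=.
  exact: Fdw_convex_splitting.
have dissip : hprod mu dphi <= 0.
  rewrite hprodC Gscheme_flux oppr_le0; apply: mulr_ge0; first exact: ltW.
  by apply: stiffA_ge0 => I k; exact: MG_ge0.
by have := step.2 dphi; rewrite /lumped_energy; lra.
Qed.

Lemma lumped_entropy_step :
  lumped (fun v => Geps eps (p1 v)) <=
  lumped (fun v => Geps eps (p0 v)) + dt / (8 * eta ^+ 2) * (stiff p0 p0 + stiff p1 p1).
Proof.
have dG : lumped (fun v => Geps eps (p1 v)) - lumped (fun v => Geps eps (p0 v))
          <= hprod dphi (fun v => dGeps eps (p1 v)).
  rewrite -lumpedB; apply: lumped_le => v /=.
  by have := Geps_tangent eps_gt0 eps_lt_half (p1 v) (p0 v); lra.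
rewrite Gscheme_flux stiffA_MG_dGeps // stiffC in dG.
have chem_le : stiff p1 chem <= stiff p1 mu.
  have := hprod_ge0 (fun v => mu v - chem v); rewrite hprodBl.
  by have := step.2 (fun v => mu v - chem v); rewrite stiffBr; lra.
set c := (4 * eta ^+ 2)^-1.
have c_ge0 : 0 <= c by rewrite invr_ge0 mulr_ge0 ?sqr_ge0.
have chem_ge : - c * stiff p1 p0 <= stiff p1 chem.
  by rewrite stiffDr stiff_Fep -/c; have := stiff_Fcp_ge0 eta p1; lra.
have cross := ler_wpM2l c_ge0 (stiff_cross_le p1 p0).
have mu_ge : - stiff p1 mu <= c / 2 * (stiff p0 p0 + stiff p1 p1) by lra.
have := ler_wpM2l (ltW dt_gt0) mu_ge.
rewrite (_ : 8 * eta ^+ 2 = 2 * (4 * eta ^+ 2)); last by ring.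
rewrite (invfM 2) -/c; lra.
Qed.

End SchemeStep.

End DiscreteForms.

(** * Mass lumping on simplices of dimension at most three *)

Section TupleSums.
Context {M : nmodType} {T : finType}.

Lemma big_tuple_cons p (F : p.+1.-tuple T -> M) :
  \sum_(t : p.+1.-tuple T) F t = \sum_(y : T) \sum_(t : p.-tuple T) F [tuple of y :: t].
Proof.
rewrite pair_big /= (reindex (fun yt : T * p.-tuple T => [tuple of yt.1 :: yt.2])) //=.
exists (fun t : p.+1.-tuple T => (thead t, behead_tuple t)).
  by move=> [y t] _ /=; congr pair; apply: val_inj.
by move=> t _; apply: val_inj; rewrite /= [in RHS](tuple_eta t).
Qed.

Lemma big_tuple0 (F : 0.-tuple T -> M) : \sum_(t : 0.-tuple T) F t = F [tuple].
Proof.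
rewrite (big_pred1 [tuple]) // => t /=; rewrite (tuple0 t).
by apply/esym/eqP; apply: val_inj.
Qed.

Lemma big_tuple2 (F : 2.-tuple T -> M) :
  \sum_(t : 2.-tuple T) F t = \sum_y1 \sum_y2 F [tuple y1; y2].
Proof.
rewrite big_tuple_cons; apply: eq_bigr => y1 _.
rewrite big_tuple_cons; apply: eq_bigr => y2 _.
by rewrite big_tuple0; congr F; apply: val_inj.
Qed.

Lemma big_tuple3 (F : 3.-tuple T -> M) :
  \sum_(t : 3.-tuple T) F t = \sum_y1 \sum_y2 \sum_y3 F [tuple y1; y2; y3].
Proof.
rewrite big_tuple_cons; apply: eq_bigr => y1 _.
by rewrite big_tuple2; apply: eq_bigr => y2 _; apply: eq_bigr => y3 _; congr F; apply: val_inj.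
Qed.

Lemma big_tuple4 (F : 4.-tuple T -> M) :
  \sum_(t : 4.-tuple T) F t =
  \sum_y1 \sum_y2 \sum_y3 \sum_y4 F [tuple y1; y2; y3; y4].
Proof.
rewrite big_tuple_cons; apply: eq_bigr => y1 _.
rewrite big_tuple3; do 3 (apply: eq_bigr => ? _).
by congr F; apply: val_inj.
Qed.

End TupleSums.

Section SimplexQuadrature.
Context {R : realType}.

Definition simplex_weight d p : R := (d`! * p`!)%:R / ((d + p)`!)%:R.

Lemma hpolyE d p (a : 'I_d.+1 -> R) : hpoly p a =
  \sum_(t : p.-tuple 'I_d.+1)
    (if sorted (fun i j : 'I_d.+1 => (i <= j)%N) t then \prod_(i <- t) a i else 0).
Proof. by rewrite /hpoly big_mkcond. Qed.

Ltac expand_hpoly :=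
  rewrite !hpolyE ?big_tuple4 ?big_tuple3 ?big_tuple2 /=;
  rewrite !big_ord_recl !big_ord0 /= ?big_cons ?big_nil /=.

Ltac sos_nonneg :=
  repeat first [exact: sqr_ge0 | exact: ler0n | apply: addr_ge0 |
                rewrite invr_ge0 | apply: mulr_ge0].

(* On a simplex, u_h^2 - u_h = sum_(i,j) lambda_i lambda_j (b a_i a_j) for nodal values a, and
   a_k^2 (a_k - 1)^2 = (b a_k a_k)^2, so the exact and the lumped integrals of F(u_h) are both
   quadratic forms in the b a_i a_j; the certificates below write 40 times the first minus
   the second as a sum of squares in them. *)
Let b (s t : R) := s * t - (s + t) / 2.

Lemma lumped_sqr_ge_exact_1d (a : 'I_2 -> R) :
  simplex_weight 1 2 * hpoly 2 a <= 2%:R^-1 * \sum_(k < 2) a k ^+ 2.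
Proof.
rewrite (_ : simplex_weight 1 2 = 2 / 6) //.
expand_hpoly.
set a0 := a ord0; set a1 := a (lift ord0 ord0).
rewrite -subr_ge0 (_ : _ - _ = 1 / 6 * (a0 - a1) ^+ 2); first by sos_nonneg.
by field.
Qed.

Lemma lumped_dw_le_exact_1d (a : 'I_2 -> R) :
  2%:R^-1 * \sum_(k < 2) (a k ^+ 2 * (a k - 1) ^+ 2) <=
  40 * (simplex_weight 1 4 * hpoly 4 a - 2 * (simplex_weight 1 3 * hpoly 3 a)
        + simplex_weight 1 2 * hpoly 2 a).
Proof.
rewrite (_ : simplex_weight 1 2 = 2 / 6) //
        (_ : simplex_weight 1 3 = 6 / 24) //.
rewrite (_ : simplex_weight 1 4 = 24 / 120) //.
expand_hpoly.
set a0 := a ord0; set a1 := a (lift ord0 ord0).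
rewrite -subr_ge0 (_ : _ - _ =
      15 / 2 * (b a0 a0 + 8 / 15 * b a0 a1 + 8 / 45 * b a1 a1) ^+ 2
    + 16 / 5 * (b a0 a1 + 37 / 36 * b a1 a1) ^+ 2
    + 629 / 162 * (b a1 a1) ^+ 2); first by sos_nonneg.
by rewrite /b; field.
Qed.

Lemma lumped_sqr_ge_exact_2d (a : 'I_3 -> R) :
  simplex_weight 2 2 * hpoly 2 a <= 3%:R^-1 * \sum_(k < 3) a k ^+ 2.
Proof.
rewrite (_ : simplex_weight 2 2 = 4 / 24) //.
expand_hpoly.
set a0 := a ord0; set a1 := a (lift ord0 ord0); set a2 := a (lift ord0 (lift ord0 ord0)).
rewrite -subr_ge0 (_ : _ - _ = 1 / 12 * ((a0 - a1) ^+ 2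
    + (a0 - a2) ^+ 2
    + (a1 - a2) ^+ 2)); first by sos_nonneg.
by field.
Qed.

Lemma lumped_dw_le_exact_2d (a : 'I_3 -> R) :
  3%:R^-1 * \sum_(k < 3) (a k ^+ 2 * (a k - 1) ^+ 2) <=
  40 * (simplex_weight 2 4 * hpoly 4 a - 2 * (simplex_weight 2 3 * hpoly 3 a)
        + simplex_weight 2 2 * hpoly 2 a).
Proof.
rewrite (_ : simplex_weight 2 2 = 4 / 24) //
        (_ : simplex_weight 2 3 = 12 / 120) //.
rewrite (_ : simplex_weight 2 4 = 48 / 720) //.
expand_hpoly.
set a0 := a ord0; set a1 := a (lift ord0 ord0); set a2 := a (lift ord0 (lift ord0 ord0)).
rewrite -subr_ge0 (_ : _ - _ =
      7 / 3 * (b a0 a0 + 4 / 7 * b a0 a1 + 4 / 7 * b a0 a2 + 4 / 21 * b a1 a1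
            + 4 / 21 * b a1 a2 + 4 / 21 * b a2 a2) ^+ 2
    + 64 / 63 * (b a0 a1 + 1 / 8 * b a0 a2 + 17 / 16 * b a1 a1 + 5 / 8 * b a1 a2
          + 3 / 16 * b a2 a2) ^+ 2
    + (b a0 a2 + 1 / 18 * b a1 a1 + 5 / 9 * b a1 a2 + 19 / 18 * b a2 a2) ^+ 2
    + 89 / 81 * (b a1 a1 + 44 / 89 * b a1 a2 + 8 / 89 * b a2 a2) ^+ 2
    + 64 / 89 * (b a1 a2 + 11 / 16 * b a2 a2) ^+ 2
    + 3 / 4 * (b a2 a2) ^+ 2); first by sos_nonneg.
by rewrite /b; field.
Qed.

Lemma lumped_sqr_ge_exact_3d (a : 'I_4 -> R) :
  simplex_weight 3 2 * hpoly 2 a <= 4%:R^-1 * \sum_(k < 4) a k ^+ 2.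
Proof.
rewrite (_ : simplex_weight 3 2 = 12 / 120) //.
expand_hpoly.
set a0 := a ord0; set a1 := a (lift ord0 ord0); set a2 := a (lift ord0 (lift ord0 ord0)).
set a3 := a (lift ord0 (lift ord0 (lift ord0 ord0))).
rewrite -subr_ge0 (_ : _ - _ = 1 / 20 * ((a0 - a1) ^+ 2
    + (a0 - a2) ^+ 2
    + (a0 - a3) ^+ 2
    + (a1 - a2) ^+ 2
    + (a1 - a3) ^+ 2
    + (a2 - a3) ^+ 2)); first by sos_nonneg.
by field.
Qed.

Lemma lumped_dw_le_exact_3d (a : 'I_4 -> R) :
  4%:R^-1 * \sum_(k < 4) (a k ^+ 2 * (a k - 1) ^+ 2) <=
  40 * (simplex_weight 3 4 * hpoly 4 a - 2 * (simplex_weight 3 3 * hpoly 3 a)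
        + simplex_weight 3 2 * hpoly 2 a).
Proof.
rewrite (_ : simplex_weight 3 2 = 12 / 120) //
        (_ : simplex_weight 3 3 = 36 / 720) //.
rewrite (_ : simplex_weight 3 4 = 144 / (70 * 72)); last by rewrite -natrM.
expand_hpoly.
set a0 := a ord0; set a1 := a (lift ord0 ord0); set a2 := a (lift ord0 (lift ord0 ord0)).
set a3 := a (lift ord0 (lift ord0 (lift ord0 ord0))).
rewrite -subr_ge0 (_ : _ - _ =
      25 / 28 * (b a0 a0 + 16 / 25 * b a0 a1 + 16 / 25 * b a0 a2 + 16 / 25 * b a0 a3
            + 16 / 75 * b a1 a1 + 16 / 75 * b a1 a2 + 16 / 75 * b a1 a3 + 16 / 75 * b a2 a2
            + 16 / 75 * b a2 a3 + 16 / 75 * b a3 a3) ^+ 2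
    + 208 / 525 * (b a0 a1 + 1 / 26 * b a0 a2 + 1 / 26 * b a0 a3 + 59 / 52 * b a1 a1
          + 17 / 26 * b a1 a2 + 17 / 26 * b a1 a3 + 9 / 52 * b a2 a2 + 9 / 52 * b a2 a3
          + 9 / 52 * b a3 a3) ^+ 2
    + 36 / 91 * (b a0 a2 + 1 / 27 * b a0 a3 + 7 / 54 * b a1 a1 + 17 / 27 * b a1 a2
          + 4 / 27 * b a1 a3 + 61 / 54 * b a2 a2 + 35 / 54 * b a2 a3 + 1 / 6 * b a3 a3) ^+ 2
    + 32 / 81 * (b a0 a3 + 1 / 8 * b a1 a1 + 1 / 8 * b a1 a2 + 5 / 8 * b a1 a3
          + 1 / 8 * b a2 a2 + 5 / 8 * b a2 a3 + 9 / 8 * b a3 a3) ^+ 2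
    + 83 / 252 * (b a1 a1 + 50 / 83 * b a1 a2 + 50 / 83 * b a1 a3 + 2 / 83 * b a2 a2
          + 2 / 83 * b a2 a3 + 2 / 83 * b a3 a3) ^+ 2
    + 313 / 1162 * (b a1 a2 - 19 / 313 * b a1 a3 + 225 / 313 * b a2 a2 + 343 / 939 * b a2 a3
          + 11 / 939 * b a3 a3) ^+ 2
    + 84 / 313 * (b a1 a3 + 1 / 18 * b a2 a2 + 7 / 18 * b a2 a3 + 13 / 18 * b a3 a3) ^+ 2
    + 143 / 756 * (b a2 a2 + 92 / 143 * b a2 a3 - 4 / 143 * b a3 a3) ^+ 2
    + 301 / 1287 * (b a2 a3 + 23 / 43 * b a3 a3) ^+ 2
    + 21 / 172 * (b a3 a3) ^+ 2); first by sos_nonneg.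
by rewrite /b; field.
Qed.

End SimplexQuadrature.

Section MassLumping.
Context {R : realType} {d : nat} {V Elt : finType}.
Variables (x : V -> 'I_d -> R) (vtx : Elt -> 'I_d.+1 -> V).
Hypothesis d_small : (1 <= d <= 3)%N.

Local Notation lumped := (lumped x vtx).
Local Notation intpow := (intpow x vtx).

Lemma simplex_sqr_le (a : 'I_d.+1 -> R) :
  simplex_weight d 2 * hpoly 2 a <= d.+1%:R^-1 * \sum_(k < d.+1) a k ^+ 2.
Proof.
case: d d_small a => [|[|[|[|?]]]] // _ a.
- exact: lumped_sqr_ge_exact_1d.
- exact: lumped_sqr_ge_exact_2d.
- exact: lumped_sqr_ge_exact_3d.
Qed.

Lemma simplex_dw_le (a : 'I_d.+1 -> R) :
  d.+1%:R^-1 * \sum_(k < d.+1) (a k ^+ 2 * (a k - 1) ^+ 2) <=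
  40 * (simplex_weight d 4 * hpoly 4 a - 2 * (simplex_weight d 3 * hpoly 3 a)
        + simplex_weight d 2 * hpoly 2 a).
Proof.
case: d d_small a => [|[|[|[|?]]]] // _ a.
- exact: lumped_dw_le_exact_1d.
- exact: lumped_dw_le_exact_2d.
- exact: lumped_dw_le_exact_3d.
Qed.

Lemma intpow2_le_lumped u : intpow u 2 <= lumped (fun v => u v ^+ 2).
Proof.
apply: ler_sum => I _; rewrite -[vol _ _ I * _ * _]mulrA -[vol _ _ I / _ * _]mulrA.
by apply: ler_wpM2l; [exact: vol_ge0 | exact: simplex_sqr_le].
Qed.

Lemma lumped_dw_le_intpow u :
  lumped (fun v => u v ^+ 2 * (u v - 1) ^+ 2) <=
  40 * (intpow u 4 - 2 * intpow u 3 + intpow u 2).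
Proof.
rewrite /Defs.intpow [2 * _]mulr_sumr -sumrB -big_split mulr_sumr /=.
apply: ler_sum => I _; rewrite -[vol _ _ I / _ * _]mulrA.
have -> : forall a w2 w3 w4 h2 h3 h4 : R,
    40 * (a * w4 * h4 - 2 * (a * w3 * h3) + a * w2 * h2) =
    a * (40 * (w4 * h4 - 2 * (w3 * h3) + w2 * h2)) by move=> *; ring.
by apply: ler_wpM2l; [exact: vol_ge0 | exact: simplex_dw_le].
Qed.

Lemma lumped_energy_le_energy eta u :
  lumped_energy x vtx eta u <= 40 * energy x vtx eta u.
Proof.
rewrite /lumped_energy /energy.
have c_ge0 : 0 <= (4 * eta ^+ 2)^-1 by rewrite invr_ge0 mulr_ge0 ?sqr_ge0.
have -> : lumped (fun v => Fdw eta (u v)) =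
          (4 * eta ^+ 2)^-1 * lumped (fun v => u v ^+ 2 * (u v - 1) ^+ 2).
  by rewrite -lumpedZ; apply: eq_lumped => v; rewrite mulrC.
have := ler_wpM2l c_ge0 (lumped_dw_le_intpow u).
have := stiff_ge0 x vtx u.
lra.
Qed.

Lemma energy_ge0 eta u : 0 <= energy x vtx eta u.
Proof.
have := lumped_energy_le_energy eta u; have := lumped_energy_ge0 x vtx eta u.
lra.
Qed.

Lemma intpow_sqr_le_entropy (g : R -> R) eps u :
  (forall t, g t ^+ 2 <= 2 * (eps * (1 - eps)) * Geps eps t) ->
  intpow (fun v => g (u v)) 2 <= 2 * (eps * (1 - eps)) * lumped (fun v => Geps eps (u v)).
Proof.
move=> g_le; apply: le_trans (intpow2_le_lumped _) _.
by rewrite -lumpedZ; apply: lumped_le.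
Qed.

End MassLumping.

(** * Accumulation over the time steps *)

Section Evolution.
Context {R : realType} {d : nat} {V Elt : finType}.
Variables (x : V -> 'I_d -> R) (vtx : Elt -> 'I_d.+1 -> V).
Variables (dt eps eta : R) (n : nat) (phi mu : nat -> V -> R).
Hypotheses (dt_gt0 : 0 < dt) (eps_gt0 : 0 < eps) (eps_lt_half : eps < 1 / 2).
Hypothesis scheme : forall m, (m <= n)%N ->
  Gscheme x vtx dt eps eta (phi m) (phi m.+1) (mu m.+1).

Local Notation E0 := (lumped_energy x vtx eta (phi 0%N)).

Lemma Gscheme_energy_bound m : (m <= n.+1)%N -> lumped_energy x vtx eta (phi m) <= E0.
Proof.
elim: m => [//|m IH] lt_mn.
apply: le_trans (IH (ltnW lt_mn)).
exact: lumped_energy_decay dt_gt0 eps_gt0 eps_lt_half (scheme lt_mn).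
Qed.

Lemma Gscheme_entropy_bound m : (m <= n.+1)%N ->
  lumped x vtx (fun v => Geps eps (phi m v)) <=
  lumped x vtx (fun v => Geps eps (phi 0%N v)) + m%:R * (dt / (8 * eta ^+ 2) * (4 * E0)).
Proof.
elim: m => [_|m IH lt_mn]; first by rewrite mul0r addr0.
have S_le k : (k <= n.+1)%N -> stiff x vtx (phi k) (phi k) <= 2 * E0.
  move=> le_kn; apply: le_trans (stiff_le_lumped_energy _ _ eta _) _.
  by rewrite ler_pM2l ?Gscheme_energy_bound.
have c_ge0 : 0 <= dt / (8 * eta ^+ 2).
  by apply: divr_ge0; [exact: ltW | rewrite mulr_ge0 ?sqr_ge0].
have := ler_wpM2l c_ge0 (lerD (S_le m (ltnW lt_mn)) (S_le m.+1 lt_mn)).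
have := lumped_entropy_step dt_gt0 eps_gt0 eps_lt_half (scheme lt_mn).
by have := IH (ltnW lt_mn); rewrite -natr1 mulrDl mul1r; lra.
Qed.

Lemma Gscheme_entropy_le_initial T : (1 <= d <= 3)%N -> n.+1%:R * dt <= T ->
  lumped x vtx (fun v => Geps eps (phi n.+1 v)) <=
  lumped x vtx (fun v => Geps eps (phi 0%N v))
  + T / (2 * eta ^+ 2) * (40 * energy x vtx eta (phi 0%N)).
Proof.
move=> d_small ndt_le; apply: le_trans (Gscheme_entropy_bound (leqnn _)) _.
rewrite lerD2l (_ : 8 * eta ^+ 2 = 4 * (2 * eta ^+ 2)) ?(invfM 4); last by ring.
set k := (2 * eta ^+ 2)^-1.
have k_ge0 : 0 <= k by rewrite invr_ge0 mulr_ge0 ?sqr_ge0.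
have T_ge0 : 0 <= T by apply: le_trans ndt_le; rewrite mulr_ge0 ?ltW.
have := ler_wpM2r (mulr_ge0 k_ge0 (lumped_energy_ge0 x vtx eta (phi 0%N))) ndt_le.
have := lumped_energy_le_energy x vtx d_small eta (phi 0%N).
move/(ler_wpM2l (mulr_ge0 T_ge0 k_ge0)).
lra.
Qed.

End Evolution.

Lemma scaled_entropy_bound {R : realFieldType} (eps eta T E G Gn X : R) :
  0 < eps < 1 -> 0 < eta <= 1 -> 0 <= T -> 0 <= E -> 0 <= G ->
  Gn <= G + T / (2 * eta ^+ 2) * (40 * E) ->
  X <= 2 * (eps * (1 - eps)) * Gn ->
  X <= (2 * G + 40 * T * E) * (eps * (1 - eps) / eta ^+ 2)
    <= (2 * G + 40 * T * E) * (eps / eta ^+ 2).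
Proof.
move=> /andP[eps_gt0 eps_lt1] /andP[eta_gt0 eta_le1] T_ge0 E_ge0 G_ge0 Gn_le X_le.
rewrite (invfM 2 (eta ^+ 2)) in Gn_le; set k := (eta ^+ 2)^-1 in Gn_le *.
have k_ge1 : 1 <= k.
  have eta_ge0 := ltW eta_gt0.
  by rewrite invr_ge1 ?unitfE ?expf_neq0 ?gt_eqF ?exprn_gt0 // expr_le1.
have m_ge0 : 0 <= eps * (1 - eps) by rewrite mulr_ge0 ?subr_ge0 ?(ltW eps_gt0) ?(ltW eps_lt1).
have C_ge0 : 0 <= 2 * G + 40 * T * E by rewrite addr_ge0 ?mulr_ge0.
apply/andP; split; last first.
  by rewrite ler_wpM2l // ler_wpM2r ?invr_ge0 ?sqr_ge0 //; nra.
have := ler_wpM2l (mulr_ge0 (ler0n _ 2) m_ge0) Gn_le.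
have := ler_wpM2l (mulr_ge0 m_ge0 G_ge0) k_ge1.
rewrite mulr1; lra.
Qed.

Theorem corollary1 (R : realType) :
  exists C : R -> R -> R -> R,
  forall (d : nat) (V Elt : finType) (x : V -> 'I_d -> R) (vtx : Elt -> 'I_d.+1 -> V),
    (1 <= d <= 3)%N -> structured_mesh x vtx ->
  forall (eps eta T : R) (N n : nat) (phi mu : nat -> V -> R),
    0 < eps < 1 / 2 -> 0 < eta <= 1 -> 0 < T -> (0 < N)%N -> (n < N)%N ->
    (forall m, (m <= n)%N ->
       Gscheme x vtx (T / N%:R) eps eta (phi m) (phi m.+1) (mu m.+1)) ->
    let Cst := C T (energy x vtx eta (phi 0%N))
                   (lumped x vtx (fun v => Geps eps (phi 0%N v))) in
    intpow x vtx (fun v => Num.min (phi n.+1 v) 0) 2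
      <= Cst * (eps * (1 - eps) / eta ^+ 2) <= Cst * (eps / eta ^+ 2)
    /\
    intpow x vtx (fun v => Num.max (phi n.+1 v - 1) 0) 2
      <= Cst * (eps * (1 - eps) / eta ^+ 2) <= Cst * (eps / eta ^+ 2).
Proof.
exists (fun T E G => 2 * G + 40 * T * E).
move=> d V Elt x vtx d_small _ eps eta T N n phi mu /andP[eps_gt0 eps_lt] eta_bnd
  T_gt0 N_gt0 n_lt scheme Cst.
have dt_gt0 : 0 < T / N%:R by rewrite divr_gt0 ?ltr0n.
have ndt_le : n.+1%:R * (T / N%:R) <= T.
  by rewrite mulrCA ger_pMr // ler_pdivrMr ?ltr0n // mul1r ler_nat.
have Gn_le := Gscheme_entropy_le_initial dt_gt0 eps_gt0 eps_lt scheme d_small ndt_le.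
have E0_ge0 := energy_ge0 x vtx d_small eta (phi 0%N).
have G0_ge0 := lumped_ge0 x vtx (fun v => Geps_ge0 eps_gt0 eps_lt (phi 0%N v)).
have eps_lt1 : 0 < eps < 1 by rewrite eps_gt0 (lt_trans eps_lt) // ltr_pdivrMr // mul1r ltr1n.
have bound := scaled_entropy_bound eps_lt1 eta_bnd (ltW T_gt0) E0_ge0 G0_ge0 Gn_le.
split; apply: bound.
- exact: (intpow_sqr_le_entropy (g := fun t => Num.min t 0) x vtx d_small _
    (Geps_neg_part eps_gt0 eps_lt)).
- exact: (intpow_sqr_le_entropy (g := fun t => Num.max (t - 1) 0) x vtx d_small _
    (Geps_pos_part eps_gt0 eps_lt)).
Qed.
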